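(* If $P$ is a finite interval order having an interval representation in which every interval has length $0$ or $1$, then $\dim(P) \le 3$.
   Context: Posets are finite and reflexive. An interval representation of a poset $P$ assigns to each element $x$ a closed bounded interval $[\ell(x), r(x)]$ (possibly degenerate, $\ell(x)=r(x)$, which has length $0$) such that for distinct $x,y$, $x<y$ in $P$ if and only if $r(x)<\ell(y)$. The dimension $\dim(P)$ is the minimum number of linear extensions of $P$ whose intersection is $P$ (i.e. $x<y$ in $P$ iff $x<y$ in each of them). *)

From mathcomp Require Import all_boot all_order all_algebra.
From mathcomp Require Import reals.
Set Implicit Arguments. Unset Strict Implicit. Unset Printing Implicit Defensive.
Import Order.TTheory GRing.Theory Num.Theory.
Local Open Scope ring_scope.

Definition is_poset (T : finType) (le : rel T) : Prop :=
  reflexive le /\ antisymmetric le /\ transitive le.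

Definition interval_rep (R : realType) (T : finType) (le : rel T)
    (l r : T -> R) : Prop :=
  (forall x, l x <= r x) /\
  (forall x y, x != y -> (le x y <-> r x < l y)).

Definition lengths_0_or_1 (R : realType) (T : finType) (l r : T -> R) : Prop :=
  forall x, r x - l x = 0 \/ r x - l x = 1.

Definition linear_extension (T : finType) (le L : rel T) : Prop :=
  is_poset L /\ total L /\ (forall x y, le x y -> L x y).

Definition dim_le (T : finType) (le : rel T) (k : nat) : Prop :=
  exists (n : nat) (Ls : 'I_n -> rel T),
    (n <= k)%N /\ (forall i, linear_extension le (Ls i)) /\
    (forall x y, le x y <-> (forall i, Ls i x y)).

From mathcomp Require Import all_boot all_order all_algebra.
From mathcomp Require Import reals.
From mathcomp Require Import lra zify.
Set Implicit Arguments. Unset Strict Implicit.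
Import Order.TTheory GRing.Theory Num.Theory.
Local Open Scope ring_scope.

(* Call the length-0 intervals points and the length-1 intervals long, and let
   the level of an interval be the integer part of its left end point.  Two
   distinct elements are incomparable exactly when their intervals overlap.
   Three linear extensions are obtained by sorting T along three keys:
   - level_key: by level, then points left to right, then long intervals
     right to left;
   - shift_key e (e = true, false): by an anchor point, which is the right end
     point for long intervals whose level has parity e and the left end point
     otherwise.
   Every key increases from an interval to any interval lying entirely to its
   right, so each order extends P (level_key_sep, shift_key_sep).  Every
   overlapping pair is reversed by one of the keys (overlap_reversed), except
   for identical intervals; those are separated by breaking ties with the
   enumeration of T ascending in one shifted order and descending in the
   other (tie_reversed). *)

Section KeyOrder.
Variables (d : Order.disp_t) (O : orderType d) (T : finType) (key : T -> O).

Definition key_order : rel T := fun x y => (key x <= key y)%O.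

Lemma key_order_linear : injective key -> is_poset key_order /\ total key_order.
Proof.
move=> key_inj; split; [split; [|split]|].
- by move=> x; exact: lexx.
- by move=> x y /le_anti /key_inj.
- by move=> y x z; exact: le_trans.
- by move=> x y; exact: le_total.
Qed.

Lemma key_order_extension (le : rel T) :
  reflexive le -> injective key ->
  (forall x y, x != y -> le x y -> (key x < key y)%O) ->
  linear_extension le key_order.
Proof.
move=> le_refl key_inj key_mono; have [poset_key total_key] := key_order_linear key_inj.
split=> //; split=> // x y le_xy; rewrite /key_order.
by have [->|neq_xy] := eqVneq x y; [exact: lexx | exact/ltW/key_mono].
Qed.

End KeyOrder.

Section TieBreak.
Variables (d : Order.disp_t) (O : orderType d) (T : finType).

Definition asc_key (k : T -> O) (x : T) : O *l nat := (k x, val (enum_rank x)).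
Definition desc_key (k : T -> O) (x : T) : O *l nat^d := (k x, val (enum_rank x)).

Lemma asc_key_inj (k : T -> O) : injective (asc_key k).
Proof. by move=> x y [_ /val_inj /enum_rank_inj]. Qed.

Lemma desc_key_inj (k : T -> O) : injective (desc_key k).
Proof. by move=> x y [_ /val_inj /enum_rank_inj]. Qed.

Lemma asc_key_lt (k : T -> O) x y : (k x < k y)%O -> (asc_key k x < asc_key k y)%O.
Proof. by move=> lt_xy; rewrite ltxi_pair (ltW lt_xy) lt_geF. Qed.

Lemma desc_key_lt (k : T -> O) x y : (k x < k y)%O -> (desc_key k x < desc_key k y)%O.
Proof. by move=> lt_xy; rewrite ltxi_pair (ltW lt_xy) lt_geF. Qed.

Lemma asc_key_extension (le : rel T) (k : T -> O) : reflexive le ->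
  (forall x y, x != y -> le x y -> (k x < k y)%O) ->
  linear_extension le (key_order (asc_key k)).
Proof.
move=> le_refl k_mono; apply: (key_order_extension le_refl (@asc_key_inj k)).
by move=> x y ne_xy le_xy; apply/asc_key_lt/k_mono.
Qed.

Lemma desc_key_extension (le : rel T) (k : T -> O) : reflexive le ->
  (forall x y, x != y -> le x y -> (k x < k y)%O) ->
  linear_extension le (key_order (desc_key k)).
Proof.
move=> le_refl k_mono; apply: (key_order_extension le_refl (@desc_key_inj k)).
by move=> x y ne_xy le_xy; apply/desc_key_lt/k_mono.
Qed.

Lemma tie_reversed (k1 k2 : T -> O) x y : k1 y = k1 x -> k2 y = k2 x ->
  (asc_key k1 y <= asc_key k1 x)%O \/ (desc_key k2 y <= desc_key k2 x)%O.
Proof.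
move=> k1_yx k2_yx; rewrite !lexi_pair k1_yx k2_yx !lexx /=.
have [le_yx|lt_xy] := leqP (enum_rank y) (enum_rank x); [left|right] => //.
by rewrite leEdual; apply: ltnW.
Qed.

End TieBreak.

(* A family of linear extensions witnesses dim(P) <= n.+1 as soon as every
   incomparable pair appears reversed in one of them; comparable pairs are
   handled by antisymmetry of the extensions. *)
Lemma dim_le_of_reversals (T : finType) (le : rel T) (n : nat)
    (Ls : 'I_n.+1 -> rel T) :
  is_poset le -> (forall i, linear_extension le (Ls i)) ->
  (forall x y, ~~ le x y -> ~~ le y x -> exists i, Ls i y x) ->
  dim_le le n.+1.
Proof.
move=> [le_refl [le_anti le_trans]] Ls_ext reversed.
exists n.+1, Ls; split=> //; split=> // x y.
split=> [le_xy i | in_all]; first by have [_ [_ ->]] := Ls_ext i.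
apply/negPn/negP => not_le_xy.
have [i Ls_yx] : exists i, Ls i y x.
  have [le_yx|not_le_yx] := boolP (le y x); last exact: reversed.
  by exists ord0; have [_ [_ ->]] := Ls_ext ord0.
have [[_ [Ls_anti _]] _] := Ls_ext i.
by move: not_le_xy; rewrite (Ls_anti x y) ?le_refl // in_all Ls_yx.
Qed.

Lemma parity_succ (z : int) : (odd `|z + 1| == odd `|z|) = false.
Proof. by case: z => [n|[|n]] //=; rewrite ?addn1 ?subn1 /=; case: odd. Qed.

Section ShortIntervals.
Variables (R : realType) (T : finType) (l r : T -> R).
Hypothesis len01 : lengths_0_or_1 l r.

Definition long (x : T) : bool := r x != l x.

Lemma r_point x : ~~ long x -> r x = l x.
Proof. by move/negPn/eqP. Qed.

Lemma r_long x : long x -> r x = l x + 1.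
Proof. by move/eqP; case: (len01 x) => len_x ne_x; [exfalso; apply: ne_x|]; lra. Qed.

Lemma l_le_r x : l x <= r x.
Proof. by have [/r_long|/r_point] := boolP (long x) => ->; lra. Qed.

Definition level (x : T) : int := Num.floor (l x).
Definition frac (x : T) : R := l x - (level x)%:~R.

Lemma frac_ge0 x : 0 <= frac x.
Proof. by rewrite subr_ge0 floor_le. Qed.

Lemma frac_lt1 x : frac x < 1.
Proof. by have := floorD1_gt (l x); rewrite intrD /frac /level; lra. Qed.

(* First extension: by level, then points by increasing position followed by
   long intervals by decreasing position. *)
Definition level_key (x : T) : int *l R :=
  (level x, if long x then 2 - frac x else frac x).

Definition right_anchored (e : bool) (x : T) : bool :=
  long x && (odd `|level x| == e).
Definition anchor (e : bool) (x : T) : R :=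
  if right_anchored e x then r x else l x.
Definition tag (e : bool) (x : T) : int :=
  if ~~ long x then 0 else if right_anchored e x then 1 else -1.
Definition shift_key (e : bool) (x : T) : R *l int := (anchor e x, tag e x).

Lemma level_key_sep x y : r x < l y -> (level_key x < level_key y)%O.
Proof.
move=> sep; have le_level : level x <= level y by apply: le_floor; have := l_le_r x; lra.
rewrite ltxi_pair le_level /=; apply/implyP => ge_level.
have eq_level : level y = level x by apply/eqP; rewrite eq_le ge_level le_level.
have point_x : ~~ long x.
  apply/negP => /r_long r_x; have := floorD1_gt (l y); have := floor_le (l x).
  by rewrite -/(level x) -/(level y) eq_level intrD; lra.
have := frac_lt1 y; have := frac_ge0 y; rewrite (negPf point_x).
by move: sep; rewrite (r_point point_x) /frac eq_level; case: long; lra.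
Qed.

Lemma shift_key_sep e x y : r x < l y -> (shift_key e x < shift_key e y)%O.
Proof.
move=> sep; have anchor_lt : anchor e x < anchor e y.
  have := l_le_r x; have := l_le_r y; rewrite /anchor.
  by case: (right_anchored e x); case: (right_anchored e y); lra.
by rewrite ltxi_pair (ltW anchor_lt) lt_geF.
Qed.

Lemma shift_key_eq x y : l x = l y -> long x = long y ->
  forall e, shift_key e x = shift_key e y.
Proof.
move=> eq_l eq_long e.
have eq_r : r x = r y.
  have [long_x|point_x] := boolP (long x).
    by rewrite !r_long -?eq_long ?eq_l.
  by rewrite !r_point -?eq_long ?eq_l.
by rewrite /shift_key /anchor /tag /right_anchored /level eq_l eq_r eq_long.
Qed.

Lemma shift_key_by_tag e x y :
  anchor e y <= anchor e x -> tag e y < tag e x -> (shift_key e y < shift_key e x)%O.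
Proof. by move=> le_anchor lt_tag; rewrite ltxi_pair le_anchor lt_tag implybT. Qed.

Lemma shift_key_by_anchor e x y :
  anchor e y < anchor e x -> (shift_key e y < shift_key e x)%O.
Proof. by move=> lt_anchor; rewrite ltxi_pair (ltW lt_anchor) lt_geF. Qed.

Lemma overlap_point_long x y : ~~ long x -> long y -> l y <= r x ->
  exists e, (shift_key e y < shift_key e x)%O.
Proof.
move=> point_x long_y ov; pose e := ~~ odd `|level y|.
have left_y : right_anchored e y = false.
  by rewrite /right_anchored /e; case: odd; rewrite andbF.
exists e; apply: shift_key_by_tag.
  by rewrite /anchor left_y /right_anchored (negPf point_x) -(r_point point_x).
by rewrite /tag left_y long_y point_x.
Qed.

Lemma overlap_long_point x y : long x -> ~~ long y -> l y <= r x ->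
  exists e, (shift_key e y < shift_key e x)%O.
Proof.
move=> long_x point_y ov; exists (odd `|level x|); apply: shift_key_by_tag.
  by rewrite /anchor /right_anchored (negPf point_y) long_x eqxx.
by rewrite /tag /right_anchored point_y long_x eqxx.
Qed.

Lemma overlap_long_long x y : long x -> long y -> l y <= r x -> l y != l x ->
  (level_key y < level_key x)%O \/ exists e, (shift_key e y < shift_key e x)%O.
Proof.
move=> long_x long_y ov; rewrite (r_long long_x) in ov.
have r_y := r_long long_y; have r_x := r_long long_x.
case: (ltgtP (l y) (l x)) => [lt_l | gt_l | //] _.
- have le_level : level y <= level x by apply: le_floor; apply: ltW.
  have [lt_level|ge_level] := ltP (level y) (level x).
    by left; rewrite ltxi_pair (ltW lt_level) lt_geF.
  have eq_level : level y = level x by apply/eqP; rewrite eq_le le_level.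
  right; exists true; apply: shift_key_by_anchor.
  by rewrite /anchor /right_anchored long_x long_y eq_level r_x r_y; case: ifP; lra.
- have le_level : level x <= level y by apply: le_floor; apply: ltW.
  have [lt_level|ge_level] := ltP (level x) (level y); last first.
    have eq_level : level y = level x by apply/eqP; rewrite eq_le ge_level.
    left; rewrite ltxi_pair eq_level lexx long_x long_y /=.
    by rewrite /frac eq_level; lra.
  have succ_level : level y = level x + 1.
    suff : level y < level x + 1 + 1 by lia.
    have := floorD1_gt (l x); rewrite floor_lt_int !intrD -/(level x); lra.
  right; exists (odd `|level x|); apply: shift_key_by_tag.
    by rewrite /anchor /right_anchored long_x long_y succ_level parity_succ eqxx r_x.
  by rewrite /tag /right_anchored long_x long_y succ_level parity_succ eqxx.
Qed.

Lemma overlap_reversed x y : l y <= r x -> l x <= r y ->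
  [\/ (level_key y < level_key x)%O,
      exists e, (shift_key e y < shift_key e x)%O
    | forall e, shift_key e y = shift_key e x].
Proof.
move=> ov_yx ov_xy.
have [long_x|point_x] := boolP (long x); have [long_y|point_y] := boolP (long y).
- have [eq_l|ne_l] := eqVneq (l y) (l x).
    by constructor 3; apply: shift_key_eq; rewrite // long_x long_y.
  by have [|] := overlap_long_long long_x long_y ov_yx ne_l; [constructor 1|constructor 2].
- by constructor 2; exact: overlap_long_point.
- by constructor 2; exact: overlap_point_long.
- constructor 3; apply: shift_key_eq; last by rewrite (negPf point_x) (negPf point_y).
  by move: ov_yx ov_xy; rewrite (r_point point_x) (r_point point_y); lra.
Qed.

End ShortIntervals.

Theorem theorem3 (R : realType) (T : finType) (le : rel T) :
  is_poset le ->
  (exists l r : T -> R, interval_rep le l r /\ lengths_0_or_1 l r) ->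
  dim_le le 3.
Proof.
move=> poset [l [r [[_ rep] len01]]]; have le_refl := proj1 poset.
have sep x y : x != y -> le x y -> r x < l y by move=> ne_xy; case: (rep x y ne_xy).
have overlap x y : ~~ le x y -> l y <= r x.
  move=> not_le_xy; have ne_xy : x != y by apply: contraNneq not_le_xy => ->.
  by rewrite leNgt; apply: contra not_le_xy => /(rep x y ne_xy).
pose L1 := key_order (asc_key (level_key l r)).
pose L2 := key_order (asc_key (shift_key l r true)).
pose L3 := key_order (desc_key (shift_key l r false)).
have ext1 : linear_extension le L1.
  by apply: asc_key_extension => // x y ne_xy /(sep x y ne_xy); apply: level_key_sep.
have ext2 : linear_extension le L2.
  by apply: asc_key_extension => // x y ne_xy /(sep x y ne_xy); apply: shift_key_sep.
have ext3 : linear_extension le L3.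
  by apply: desc_key_extension => // x y ne_xy /(sep x y ne_xy); apply: shift_key_sep.
pose Ls (i : 'I_3) := if val i == 0%N then L1 else if val i == 1%N then L2 else L3.
apply: (@dim_le_of_reversals _ _ 2 Ls poset).
  by move=> i; rewrite /Ls; case: ifP => _; [|case: ifP => _].
move=> x y not_le_xy not_le_yx.
have := overlap_reversed len01 (overlap x y not_le_xy) (overlap y x not_le_yx).
case=> [lvl | [[] sh] | tie].
- by exists ord0; apply/ltW/asc_key_lt.
- by exists (@Ordinal 3 1 isT); apply/ltW/asc_key_lt.
- by exists (@Ordinal 3 2 isT); apply/ltW/desc_key_lt.
- have [asc|desc] := tie_reversed (tie true) (tie false).
    by exists (@Ordinal 3 1 isT).
  by exists (@Ordinal 3 2 isT).
Qed.
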